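(* Consider Method 3.1 (described in the context) and suppose it does not terminate. Then for every limit point $(\bar y,\bar\gamma)$ of the generated sequence $\{(y_i,\gamma_i)\}_{i\in K}$ one has $\bar y\in X^*$.
   Context: Setting: $f,F$ convex on $\mathbb{R}^n$; $D=\{x:F(x)\le0\}$ has nonempty interior; $f$ attains its minimum $f^*$ on $D$; $X^*=\{x\in D:f(x)=f^*\}$, $x^*\in X^*$ fixed; $K=\{0,1,\dots\}$; $\operatorname{epi}(f,\mathbb{R}^n)=\{(x,\gamma):\gamma\ge f(x)\}$; $W'(z,Q)=\{b\in\mathbb{R}^{n+1}:\|b\|=1,\ \langle b,u-z\rangle\le0\ \forall u\in Q\}$ for $Q\subset\mathbb{R}^{n+1}$, and $W''(t,L)=\{a\in\mathbb{R}^n:\|a\|=1,\ \langle a,y-t\rangle\le0\ \forall y\in L\}$ for $L\subset\mathbb{R}^n$. Method 3.1: choose a closed convex bounded $G_0\subset\mathbb{R}^n$ with $x^*\in G_0$ and a closed convex $M_0\subset\mathbb{R}^{n+1}$ with $\operatorname{epi}(f,\mathbb{R}^n)\subset M_0$; points $v'\in\operatorname{int}\operatorname{epi}(f,\mathbb{R}^n)$, $v''\in\operatorname{int}D$; a number $\alpha\le\min\{f(x):x\in G_0\}$; constants $q',q''\ge1$; $i=0$. Step 1: $u_i=(y_i,\gamma_i)$ solves $\min\{\gamma:(x,\gamma)\in M_i,\ x\in G_i,\ \gamma\ge\alpha\}$; if $y_i\in D$ and $f(y_i)=\gamma_i$ stop. Step 2: choose $z_i'$ in the open segment $(v',u_i)$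 with $z_i'\notin\operatorname{int}\operatorname{epi}(f,\mathbb{R}^n)$ and $u_i+q_i'(z_i'-u_i)\in\operatorname{epi}(f,\mathbb{R}^n)$ for some $q_i'\in[1,q']$. Step 3: choose nonempty finite $B_i\subset W'(z_i',\operatorname{epi}(f,\mathbb{R}^n))$; $M_{i+1}=M_i\cap\{u:\langle b,u-z_i'\rangle\le0\ \forall b\in B_i\}$. Step 4: if $y_i\in D$, set $G_{i+1}=G_i$ and go to Step 6; otherwise choose $z_i''\in(v'',y_i)$ with $z_i''\notin\operatorname{int}D$ and $y_i+q_i''(z_i''-y_i)\in D$ for some $q_i''\in[1,q'']$. Step 5: choose nonempty finite $A_i\subset W''(z_i'',D)$; $G_{i+1}=G_i\cap\{x:\langle a,x-z_i''\rangle\le0\ \forall a\in A_i\}$. Step 6: $i\leftarrow i+1$; go to Step 1. *)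

(* R^n is represented by row vectors 'rV[R]_n (R : realType),
   R^{n+1} by pairs 'rV[R]_n * R (point (x, gamma)). *)
From HB Require Import structures.
From mathcomp Require Import all_boot all_order all_algebra.
From mathcomp Require Import all_classical all_reals all_analysis.
Import Order.TTheory GRing.Theory Num.Theory.
Import numFieldTopology.Exports numFieldNormedType.Exports.

Set Implicit Arguments.
Unset Strict Implicit.
Unset Printing Implicit Defensive.

Local Open Scope ring_scope.
Local Open Scope classical_set_scope.

Section Defs.
Variables (R : realType) (n : nat).

Definition dot (x y : 'rV[R]_n) : R := \sum_(i < n) x ord0 i * y ord0 i.
Definition enorm (x : 'rV[R]_n) : R := Num.sqrt (dot x x).

Definition pdot (u v : 'rV[R]_n * R) : R := dot u.1 v.1 + u.2 * v.2.
Definition penorm (u : 'rV[R]_n * R) : R := Num.sqrt (pdot u u).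

Definition convex_fun (f : 'rV[R]_n -> R) : Prop :=
  forall (x y : 'rV[R]_n) (t : R), 0 <= t <= 1 ->
    f (t *: x + (1 - t) *: y) <= t * f x + (1 - t) * f y.

Definition convex_set_n (A : set 'rV[R]_n) : Prop :=
  forall (x y : 'rV[R]_n) (t : R), A x -> A y -> 0 <= t <= 1 ->
    A (t *: x + (1 - t) *: y).
Definition convex_set_n1 (A : set ('rV[R]_n * R)) : Prop :=
  forall (x y : 'rV[R]_n * R) (t : R), A x -> A y -> 0 <= t <= 1 ->
    A (t *: x + (1 - t) *: y).

Definition epi (f : 'rV[R]_n -> R) : set ('rV[R]_n * R) :=
  [set u | f u.1 <= u.2].

Definition feasible (F : 'rV[R]_n -> R) : set 'rV[R]_n := [set x | F x <= 0].

Definition Xstar (f F : 'rV[R]_n -> R) : set 'rV[R]_n :=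
  [set x | feasible F x /\ forall y, feasible F y -> f x <= f y].

Definition W1 (z : 'rV[R]_n * R) (Q : set ('rV[R]_n * R)) : set ('rV[R]_n * R) :=
  [set b | penorm b = 1 /\ forall u, Q u -> pdot b (u - z) <= 0].
Definition W2 (t : 'rV[R]_n) (L : set 'rV[R]_n) : set 'rV[R]_n :=
  [set a | enorm a = 1 /\ forall y, L y -> dot a (y - t) <= 0].

Definition oseg_n (v u : 'rV[R]_n) : set 'rV[R]_n :=
  [set z | exists t : R, 0 < t < 1 /\ z = v + t *: (u - v)].
Definition oseg_n1 (v u : 'rV[R]_n * R) : set ('rV[R]_n * R) :=
  [set z | exists t : R, 0 < t < 1 /\ z = v + t *: (u - v)].

(* The data of one infinite (non-terminating) run of Method 3.1:
   u_i = (y i, gam i), z'_i = z1 i, q'_i = qq1 i, B_i = B i,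
   z''_i = z2 i, q''_i = qq2 i, A_i = A i, M_i = M i, G_i = G i.
   (z2, qq2, A are only constrained at steps with y i \notin D.) *)
Definition method31_run (f F : 'rV[R]_n -> R)
  (G : nat -> set 'rV[R]_n) (M : nat -> set ('rV[R]_n * R))
  (v1 : 'rV[R]_n * R) (v2 : 'rV[R]_n) (alpha q1 q2 : R)
  (y : nat -> 'rV[R]_n) (gam : nat -> R)
  (z1 : nat -> 'rV[R]_n * R) (qq1 : nat -> R) (B : nat -> seq ('rV[R]_n * R))
  (z2 : nat -> 'rV[R]_n) (qq2 : nat -> R) (A : nat -> seq 'rV[R]_n) : Prop :=
  forall i : nat,
  (* Step 1: u_i solves min{gamma : (x,gamma) in M_i, x in G_i, gamma >= alpha} *)
  [/\ M i (y i, gam i), G i (y i), alpha <= gam i &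
      forall x g, M i (x, g) -> G i x -> alpha <= g -> gam i <= g]
  (* the stopping test of Step 1 fails (the method does not terminate) *)
  /\ ~ (feasible F (y i) /\ f (y i) = gam i)
  /\ [/\ oseg_n1 v1 (y i, gam i) (z1 i), ~ interior (epi f) (z1 i),
         1 <= qq1 i <= q1 &
         epi f ((y i, gam i) + qq1 i *: (z1 i - (y i, gam i)))]
  /\ [/\ B i != [::], (forall b, b \in B i -> W1 (z1 i) (epi f) b) &
         M i.+1 = M i `&` [set u | forall b, b \in B i -> pdot b (u - z1 i) <= 0]]
  /\ (feasible F (y i) -> G i.+1 = G i)
  /\ (~ feasible F (y i) ->
       [/\ oseg_n v2 (y i) (z2 i), ~ interior (feasible F) (z2 i),
           1 <= qq2 i <= q2 & feasible F (y i + qq2 i *: (z2 i - y i))]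
       /\ [/\ A i != [::], (forall a, a \in A i -> W2 (z2 i) (feasible F) a) &
           G i.+1 = G i `&` [set x | forall a, a \in A i -> dot a (x - z2 i) <= 0]]).

Definition seq_limit_point (y : nat -> 'rV[R]_n) (gam : nat -> R)
  (ybar : 'rV[R]_n) (gbar : R) : Prop :=
  exists phi : nat -> nat, (forall k, (phi k < phi k.+1)%N) /\
    (fun k => (y (phi k), gam (phi k))) @ \oo --> (ybar, gbar).

End Defs.

(* Since (xstar, f xstar) stays feasible for the auxiliary problem of Step 1,
   every gam_i is at most f xstar, hence gbar <= f xstar.  Conversely, Steps
   2-3 (resp. 4-5) cut u_i off by a hyperplane through a point z_i of the
   segment (v, u_i) that keeps every later iterate and passes at distance
   >= r from the interior point v.  For the next iterate u' of the convergent
   subsequence this gives r |u_i - z_i| <= C |u_i - v| |u_i - u'|, so z_i,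
   and with it the point u_i + q_i (z_i - u_i) of epi f (resp. D), tends to
   the limit.  Thus (ybar, gbar) lies in the closure of epi f and ybar in that
   of D; both sets are closed, since a convex function bounded above near one
   point has a closed epigraph.  So ybar is feasible and
   f ybar <= gbar <= f xstar. *)

From HB Require Import structures.
From mathcomp Require Import all_boot all_order all_algebra.
From mathcomp Require Import all_classical all_reals all_analysis.
From mathcomp Require Import ring lra.
Set Implicit Arguments.
Unset Strict Implicit.
Unset Printing Implicit Defensive.

Import Order.TTheory GRing.Theory Num.Theory.
Import numFieldTopology.Exports numFieldNormedType.Exports.
Local Open Scope ring_scope.
Local Open Scope classical_set_scope.

Section Cuts.
Variables (R : realType) (V : normedModType R).
Implicit Types (S : set V) (u v w : V).

Lemma closure_normP S x :
  closure S x <-> forall e, 0 < e -> exists2 p, S p & `|x - p| < e.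
Proof.
split=> [clS e e0 | approx B /nbhs_normP [e e0 eB]].
  have [p [Sp]] := clS _ (nbhsx_ballx _ _ e0).
  by rewrite -ball_normE; exists p.
by have [p Sp xp] := approx e e0; exists p; split => //; apply: eB.
Qed.

Lemma cut_point_dist (l : {scalar V}) (C r t : R) v u u' :
  0 <= r -> 0 < t < 1 -> (forall w, l w <= C * `|w|) ->
  let z := v + t *: (u - v) in l (v - z) <= - r -> l (u' - z) <= 0 ->
  r * `|u - z| <= C * `|u - u'| * `|u - v|.
Proof.
move=> r0 /andP[t0 t1] lC z lv lu'.
have uz : u - z = (1 - t) *: (u - v) by rewrite /z scalerBl scale1r opprD addrA.
have vz : v - z = - (t *: (u - v)) by rewrite /z opprD addrA subrr add0r.
have tl : r <= t * l (u - v) by move: lv; rewrite vz linearN linearZ lerN2.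
have l0 : 0 <= l (u - v) by rewrite -(pmulr_rge0 _ t0) (le_trans r0).
have luz : (1 - t) * l (u - v) <= C * `|u - u'|.
  rewrite -linearZ -uz -[u - z](subrKA u') linearD.
  by rewrite -[leRHS]addr0 lerD.
have t1' : 0 <= 1 - t by rewrite subr_ge0 ltW.
rewrite uz normrZ ger0_norm // mulrA.
apply: ler_wpM2r => //; apply: (le_trans (ler_wpM2r t1' tl)).
rewrite -mulrA [_ * (1 - t)]mulrC; apply: le_trans luz.
by rewrite ler_piMl ?mulr_ge0 // ltW.
Qed.

(* Steps 2-3 (S = epi f) or 4-5 (S = D) of Method 3.1, taken between the
   iterate [u] and a later iterate [u']. *)
Definition cut_step S (C r q1 : R) v u u' : Prop :=
  S u \/ exists (l : {scalar V}) (t : R), 0 < t < 1 /\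
    let z := v + t *: (u - v) in
    [/\ forall w, l w <= C * `|w|, l (v - z) <= - r, l (u' - z) <= 0 &
        exists2 q, 0 <= q <= q1 & S (u + q *: (z - u))].

Lemma cut_step_near S (C r q1 : R) v u u' :
  0 <= r -> 0 <= C -> 0 <= q1 -> cut_step S C r q1 v u u' ->
  exists2 p, S p & r * `|u - p| <= q1 * (C * `|u - u'| * `|u - v|).
Proof.
move=> r0 C0 q10 [Su | [l [t [t01 [lC lv lu' [q /andP[q0 qq1] Sq]]]]]].
  by exists u; rewrite // subrr normr0 mulr0 !mulr_ge0.
exists (u + q *: (v + t *: (u - v) - u)) => //.
rewrite opprD addrA subrr add0r normrN normrZ ger0_norm // distrC mulrCA.
apply: ler_pM => //; first by rewrite mulr_ge0.
exact: cut_point_dist.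
Qed.

Lemma cut_steps_closure S (C r q1 : R) v (u : nat -> V) ubar :
  0 < r -> 0 <= C -> 0 <= q1 -> u @ \oo --> ubar ->
  (forall k, cut_step S C r q1 v (u k) (u k.+1)) -> closure S ubar.
Proof.
move=> r0 C0 q10 u_ubar cuts; apply/closure_normP => e e0.
pose D := q1 * C * (`|ubar - v| + 1) / r.
have D0 : 0 <= D by rewrite !mulr_ge0 // ?invr_ge0 ?ltW // addr_ge0.
pose d := Num.min 1 (e / (1 + 2 * D)).
have D1 : 0 < 1 + 2 * D by lra.
have d0 : 0 < d by rewrite lt_min ltr01 divr_gt0.
have de : d * (1 + 2 * D) <= e by rewrite -ler_pdivlMr // ge_min lexx orbT.
have [N _ uN] := (cvgrPdist_lt _ _).1 u_ubar d d0.
have [p Sp up] := cut_step_near (ltW r0) C0 q10 (cuts N).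
exists p => //.
have ubar_uN : `|ubar - u N| < d by apply: uN => /=.
have ubar_uN1 : `|ubar - u N.+1| < d by apply: uN => /=.
have uN_uN1 : `|u N - u N.+1| <= 2 * d.
  by rewrite (le_trans (ler_distD ubar _ _)) // distrC; lra.
have uN_v : `|u N - v| <= `|ubar - v| + 1.
  rewrite (le_trans (ler_distD ubar _ _)) // distrC addrC lerD2l.
  by rewrite (le_trans (ltW ubar_uN)) // ge_min lexx.
have : r * `|u N - p| <= r * (2 * D * d).
  apply: (le_trans up).
  have -> : r * (2 * D * d) = q1 * (C * (2 * d) * (`|ubar - v| + 1)).
    by rewrite /D; field; rewrite gt_eqF.
  by rewrite ler_wpM2l // ler_pM ?mulr_ge0 // ler_wpM2l.
rewrite ler_pM2l // => uN_p.
rewrite (le_lt_trans (ler_distD (u N) _ _)) //.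
by apply: (lt_le_trans _ de); rewrite mulrDr mulr1 mulrC ltr_leD.
Qed.

Lemma interior_cut_margin (Q : set V) v : interior Q v ->
  exists2 r, 0 < r & forall (l : {scalar V}) z w,
    (forall u, Q u -> l (u - z) <= 0) -> `|w| <= 1 -> l (v - z) <= - (r * l w).
Proof.
move=> /nbhs_normP [e e0 eQ]; exists (e / 2); first by rewrite divr_gt0.
move=> l z w lQ w1; have /lQ : Q (v + (e / 2) *: w).
  apply: eQ; rewrite /= opprD addrA subrr add0r normrN normrZ.
  rewrite ger0_norm ?divr_ge0 ?ltW //.
  rewrite (le_lt_trans (ler_wpM2l _ w1)) ?divr_ge0 ?ltW //.
  by rewrite mulr1 ltr_pdivrMr // ltr_pMr // ltr1n.
by rewrite addrAC linearD linearZ /=; lra.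
Qed.
End Cuts.

Section ConvexEpigraph.
Variables (R : realType) (n : nat).
Implicit Types (f : 'rV[R]_n -> R) (v x y : 'rV[R]_n).

Lemma le0_of_small_slope (d K : R) :
  (forall s, 0 < s < 1 -> (1 + s) * d <= s * K) -> d <= 0.
Proof.
move=> slope; rewrite leNgt; apply/negP => d0.
pose s := Num.min 2^-1 (d / (2 * (`|K| + 1))).
have K1 : 0 < `|K| + 1 by rewrite ltr_wpDl.
have s0 : 0 < s by rewrite lt_min invr_gt0 ltr0n divr_gt0 // mulr_gt0.
have s1 : s < 1 by rewrite gt_min invf_lt1 ?ltr1n.
have sK : s * (`|K| + 1) <= d / 2.
  by rewrite -ler_pdivlMr // -mulrA -invfM ge_min lexx orbT.
have := slope s; rewrite s0 s1 => /(_ isT).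
have : s * K <= s * `|K| by rewrite ler_pM2l // ler_norm.
have : 0 <= s * d by rewrite mulr_ge0 // ltW.
rewrite mulrDr mulr1 in sK; lra.
Qed.

Lemma convex_le_of_segment f v y (a g : R) : convex_fun f ->
  (forall s, 0 < s < 1 -> f (s *: v + (1 - s) *: y) <= s * a + (1 - s) * g) ->
  f y <= g.
Proof.
move=> cf seg; pose P := y + (y - v); rewrite -subr_le0.
apply: (@le0_of_small_slope _ (a - 2 * g + f P)) => s s01.
have /andP[s0 s1] := s01.
have s1' : 0 < 1 + s by lra.
pose w := s *: v + (1 - s) *: y; pose t := (1 + s)^-1.
have t01 : 0 <= t <= 1 by rewrite invr_ge0 ltW // invf_le1 // lerDl ltW.
have yE : t *: w + (1 - t) *: P = y.
  by apply/rowP => i; rewrite /t /P !mxE; field; rewrite gt_eqF.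
have := cf w P t t01; rewrite yE => /(ler_wpM2l (ltW s1')).
have -> : (1 + s) * (t * f w + (1 - t) * f P) = f w + s * f P.
  by rewrite /t; field; rewrite gt_eqF.
have := seg s s01; rewrite -/w; lra.
Qed.

Lemma closure_epi_segment_le f v y (c g : R) : convex_fun f ->
  (\forall x \near v, f x <= c) -> closure (epi f) (y, g) ->
  forall s, 0 < s < 1 -> f (s *: v + (1 - s) *: y) <= s * c + (1 - s) * g.
Proof.
move=> cf /nbhs_normP [r r0 fc] /closure_normP cl s /andP[s0 s1].
apply/ler_addgt0Pr => e e0.
have sre : 0 < Num.min (s * r) e by rewrite lt_min mulr_gt0.
have [[p h] /= fph] := cl _ sre.
rewrite prod_normE gt_max !lt_min => /andP[/andP[/= yp _] /andP[_ /= gh]].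
pose q := v + ((1 - s) / s) *: (y - p).
have fq : f q <= c.
  apply: fc; rewrite /= /q opprD addrA subrr add0r normrN normrZ.
  rewrite ger0_norm ?divr_ge0 ?subr_ge0 ?ltW // mulrAC ltr_pdivrMr // mulrC.
  by rewrite (mulrC r) (le_lt_trans _ yp) // ler_piMr // gerBl ltW.
have wE : s *: q + (1 - s) *: p = s *: v + (1 - s) *: y.
  by apply/rowP => i; rewrite /q !mxE; field; rewrite gt_eqF.
have := cf q p s; rewrite wE (ltW s0) (ltW s1) => /(_ isT) conv.
have : s * f q <= s * c by rewrite ler_pM2l.
have : (1 - s) * f p <= (1 - s) * h by rewrite ler_wpM2l // subr_ge0 ltW.
have : (1 - s) * h <= (1 - s) * g + e.
  have : h <= g + e by move: (ler_norm (h - g)); rewrite distrC in gh; lra.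
  nra.
lra.
Qed.

Lemma convex_closed_epi f v (c : R) : convex_fun f ->
  (\forall x \near v, f x <= c) -> closed (epi f).
Proof.
move=> cf fc [y g] cl; rewrite /epi /=.
exact: convex_le_of_segment cf (closure_epi_segment_le cf fc cl).
Qed.

Lemma closed_feasible (F : 'rV[R]_n -> R) :
  closed (epi F) -> closed (feasible F).
Proof.
move=> clF; apply: (@preimage_closed _ _ (fun x => (x, 0)) (epi F)) => // x _.
apply: (@cvg_pair _ _ _ (nbhs x) (nbhs x) (nbhs (0 : R))).
  exact: cvg_id.
exact: cvg_cst.
Qed.

Lemma interior_epi_near_le f (u : 'rV[R]_n * R) :
  interior (epi f) u -> \forall x \near u.1, f x <= u.2.
Proof.
case: u => x g fu; have pair_cvg : (fun y => (y, g)) @ x --> (x, g).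
  apply: (@cvg_pair _ _ _ (nbhs x) (nbhs x) (nbhs g)); first exact: cvg_id.
  exact: cvg_cst.
exact: pair_cvg _ fu.
Qed.
End ConvexEpigraph.

Section EuclideanCuts.
Variables (R : realType) (n : nat).
Implicit Types (a x : 'rV[R]_n) (b w : 'rV[R]_n * R).

Fact dot_is_linear a : linear_for *%R (dot a).
Proof.
move=> c x y; rewrite /dot mulr_sumr -big_split; apply: eq_bigr => i _.
by rewrite !mxE mulrDr mulrCA.
Qed.
HB.instance Definition _ a :=
  GRing.isLinear.Build R 'rV[R]_n R *%R (dot a) (dot_is_linear a).

Fact pdot_is_linear b : linear_for *%R (pdot b).
Proof.
by move=> c u w; rewrite /pdot /= linearP mulrDr mulrCA addrACA mulrDr.
Qed.
HB.instance Definition _ b :=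
  GRing.isLinear.Build R ('rV[R]_n * R)%type R *%R (pdot b) (pdot_is_linear b).

Lemma dot_coord_sqr_le a i : a ord0 i ^+ 2 <= dot a a.
Proof.
rewrite /dot (bigD1 i) //= expr2 lerDl.
by apply: sumr_ge0 => j _; rewrite -expr2 sqr_ge0.
Qed.

Lemma dot_ge0 a : 0 <= dot a a.
Proof. by apply: sumr_ge0 => i _; rewrite -expr2 sqr_ge0. Qed.

Lemma pdot_ge0 b : 0 <= pdot b b.
Proof. by rewrite addr_ge0 ?dot_ge0 // -expr2 sqr_ge0. Qed.

Lemma normr_coord_le x i : `|x ord0 i| <= `|x|.
Proof.
change `|x| with (mx_norm x); rewrite mx_normrE.
exact: (le_bigmax _ (fun ij : 'I_1 * 'I_n => `|x ij.1 ij.2|) (ord0, i)).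
Qed.

Lemma normr_le_enorm a : `|a| <= enorm a.
Proof.
change `|a| with (mx_norm a); rewrite mx_normrE.
apply: bigmax_le => [|[i j] _ /=]; first exact: sqrtr_ge0.
by rewrite (ord1 i) -sqrtr_sqr ler_sqrt ?dot_ge0 ?dot_coord_sqr_le.
Qed.

Lemma normr_le_penorm b : `|b| <= penorm b.
Proof.
rewrite prod_normE ge_max; apply/andP; split.
  rewrite (le_trans (normr_le_enorm _)) // ler_sqrt ?pdot_ge0 //.
  by rewrite lerDl -expr2 sqr_ge0.
by rewrite -sqrtr_sqr ler_sqrt ?pdot_ge0 // expr2 lerDr dot_ge0.
Qed.

Lemma enorm1_dot a : enorm a = 1 -> dot a a = 1.
Proof.
by move=> a1; rewrite -[dot a a]sqr_sqrtr ?dot_ge0 // -/(enorm a) a1 expr1n.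
Qed.

Lemma penorm1_pdot b : penorm b = 1 -> pdot b b = 1.
Proof.
by move=> b1; rewrite -[pdot b b]sqr_sqrtr ?pdot_ge0 // -/(penorm b) b1 expr1n.
Qed.

Lemma dot_le_norm a x : dot a x <= n%:R * (`|a| * `|x|).
Proof.
have -> : n%:R * (`|a| * `|x|) = \sum_(i < n) `|a| * `|x|.
  by rewrite sumr_const card_ord mulr_natl.
apply: ler_sum => i _.
by rewrite (le_trans (ler_norm _)) // normrM ler_pM ?normr_coord_le.
Qed.

Lemma pdot_le_norm b w : pdot b w <= n.+1%:R * (`|b| * `|w|).
Proof.
have b1 : `|b.1| <= `|b| by rewrite prod_normE le_max lexx.
have b2 : `|b.2| <= `|b| by rewrite prod_normE le_max lexx orbT.
have w1 : `|w.1| <= `|w| by rewrite prod_normE le_max lexx.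
have w2 : `|w.2| <= `|w| by rewrite prod_normE le_max lexx orbT.
rewrite /pdot -[n.+1]addn1 natrD mulrDl mul1r lerD //.
  by rewrite (le_trans (dot_le_norm _ _)) // ler_wpM2l // ler_pM.
by rewrite (le_trans (ler_norm _)) // normrM ler_pM.
Qed.

Lemma penorm1_pdot_le b w : penorm b = 1 -> pdot b w <= n.+1%:R * `|w|.
Proof.
move=> b1; rewrite (le_trans (pdot_le_norm _ _)) // ler_wpM2l // ler_piMl //.
by rewrite -b1 normr_le_penorm.
Qed.

Lemma enorm1_dot_le a x : enorm a = 1 -> dot a x <= n%:R * `|x|.
Proof.
move=> a1; rewrite (le_trans (dot_le_norm _ _)) // ler_wpM2l // ler_piMl //.
by rewrite -a1 normr_le_enorm.
Qed.

Lemma W1_margin (Q : set ('rV[R]_n * R)) v : interior Q v ->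
  exists2 r, 0 < r & forall z b, W1 z Q b -> pdot b (v - z) <= - r.
Proof.
case/interior_cut_margin => r r0 margin; exists r => // z b [b1 bQ].
by rewrite -[r]mulr1 -(penorm1_pdot b1) margin // -b1 normr_le_penorm.
Qed.

Lemma W2_margin (L : set 'rV[R]_n) v : interior L v ->
  exists2 r, 0 < r & forall t a, W2 t L a -> dot a (v - t) <= - r.
Proof.
case/interior_cut_margin => r r0 margin; exists r => // t a [a1 aL].
by rewrite -[r]mulr1 -(enorm1_dot a1) margin // -a1 normr_le_enorm.
Qed.
End EuclideanCuts.

Section Method31Run.
Variables (R : realType) (n : nat) (f F : 'rV[R]_n -> R) (xstar : 'rV[R]_n)
  (G : nat -> set 'rV[R]_n) (M : nat -> set ('rV[R]_n * R))
  (v1 : 'rV[R]_n * R) (v2 : 'rV[R]_n) (alpha q1 q2 : R)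
  (y : nat -> 'rV[R]_n) (gam : nat -> R)
  (z1 : nat -> 'rV[R]_n * R) (qq1 : nat -> R) (B : nat -> seq ('rV[R]_n * R))
  (z2 : nat -> 'rV[R]_n) (qq2 : nat -> R) (A : nat -> seq 'rV[R]_n).
Hypothesis run : method31_run f F G M v1 v2 alpha q1 q2 y gam z1 qq1 B z2 qq2 A.
Hypothesis xstar_opt : Xstar f F xstar.
Hypothesis G0_xstar : G 0 xstar.
Hypothesis epi_sub_M0 : epi f `<=` M 0.
Hypothesis alpha_le : forall x, G 0 x -> alpha <= f x.

Lemma M_nonincreasing : nonincreasing_seq M.
Proof.
apply/nonincreasing_seqP => i; apply/subsetPset.
by have [_ [_ [_ [[_ _ ->] _]]]] := run i => u [].
Qed.

Lemma G_nonincreasing : nonincreasing_seq G.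
Proof.
apply/nonincreasing_seqP => i; apply/subsetPset.
have [_ [_ [_ [_ [GD GnD]]]]] := run i.
have [Dy|Dy] := pselect (feasible F (y i)); first by rewrite GD.
by have [_ [_ _ ->]] := GnD Dy => x [].
Qed.

Lemma epi_sub_M i : epi f `<=` M i.
Proof.
elim: i => // i IH; have [_ [_ [_ [[_ BW ->] _]]]] := run i.
by move=> u epi_u; split=> [|b /BW [_]]; [exact: IH | exact].
Qed.

Lemma G_xstar i : G i xstar.
Proof.
elim: i => // i IH; have [_ [_ [_ [_ [GD GnD]]]]] := run i.
have [Dy|Dy] := pselect (feasible F (y i)); first by rewrite GD.
have [_ [_ AW ->]] := GnD Dy; split=> // a /AW [_]; apply; exact: xstar_opt.1.
Qed.

Lemma gam_le_fxstar i : gam i <= f xstar.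
Proof.
have [[_ _ _ gam_min] _] := run i.
apply: gam_min; last exact: alpha_le.
  by apply: epi_sub_M; exact: lexx.
exact: G_xstar.
Qed.

Lemma run_epi_cuts : interior (epi f) v1 ->
  exists2 r, 0 < r & forall i j, (i < j)%N ->
    cut_step (epi f) n.+1%:R r q1 v1 (y i, gam i) (y j, gam j).
Proof.
case/W1_margin => r r0 margin; exists r => // i j ij; right.
have [_ [_ [[[t [t01 z1E]] _ /andP[q_ge1 q_le] epi_q] [[Bne BW MS] _]]]] :=
  run i.
have [b Bb] : exists b, b \in B i.
  by case: (B i) Bne => // b s _; exists b; rewrite inE eqxx.
have [b1 bW] := BW b Bb.
exists (pdot b), t; split=> //; rewrite -z1E; split.
- by move=> w; exact: penorm1_pdot_le.
- exact: margin.
- have [[Mj _ _ _] _] := run j.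
  move/subsetPset: (M_nonincreasing ij) => /(_ _ Mj).
  by rewrite MS => -[_]; apply.
- by exists (qq1 i); rewrite // q_le (le_trans ler01).
Qed.

Lemma run_feasible_cuts : interior (feasible F) v2 ->
  exists2 r, 0 < r & forall i j, (i < j)%N ->
    cut_step (feasible F) n%:R r q2 v2 (y i) (y j).
Proof.
case/W2_margin => r r0 margin; exists r => // i j ij.
have [Dy|Dy] := pselect (feasible F (y i)); [by left | right].
have [_ [_ [_ [_ [_ /(_ Dy) cut]]]]] := run i.
have [[[t [t01 z2E]] _ /andP[q_ge1 q_le] Dq] [Ane AW GS]] := cut.
have [a Aa] : exists a, a \in A i.
  by case: (A i) Ane => // a s _; exists a; rewrite inE eqxx.
have [a1 aW] := AW a Aa.
exists (dot a), t; split=> //; rewrite -z2E; split.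
- by move=> w; exact: enorm1_dot_le.
- exact: margin.
- have [[_ Gj _ _] _] := run j.
  move/subsetPset: (G_nonincreasing ij) => /(_ _ Gj).
  by rewrite GS => -[_]; apply.
- by exists (qq2 i); rewrite // q_le (le_trans ler01).
Qed.
End Method31Run.

Theorem theorem3p1p2 (R : realType) (n : nat) (f F : 'rV[R]_n -> R)
  (xstar : 'rV[R]_n)
  (G : nat -> set 'rV[R]_n) (M : nat -> set ('rV[R]_n * R))
  (v1 : 'rV[R]_n * R) (v2 : 'rV[R]_n) (alpha q1 q2 : R)
  (y : nat -> 'rV[R]_n) (gam : nat -> R)
  (z1 : nat -> 'rV[R]_n * R) (qq1 : nat -> R) (B : nat -> seq ('rV[R]_n * R))
  (z2 : nat -> 'rV[R]_n) (qq2 : nat -> R) (A : nat -> seq 'rV[R]_n)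
  (ybar : 'rV[R]_n) (gbar : R) :
  convex_fun f -> convex_fun F ->
  interior (feasible F) !=set0 ->
  Xstar f F xstar ->
  closed (G 0%N) -> convex_set_n (G 0%N) -> bounded_set (G 0%N) -> G 0%N xstar ->
  closed (M 0%N) -> convex_set_n1 (M 0%N) -> epi f `<=` M 0%N ->
  interior (epi f) v1 -> interior (feasible F) v2 ->
  (forall x, G 0%N x -> alpha <= f x) ->
  1 <= q1 -> 1 <= q2 ->
  method31_run f F G M v1 v2 alpha q1 q2 y gam z1 qq1 B z2 qq2 A ->
  seq_limit_point y gam ybar gbar ->
  Xstar f F ybar.
Proof.
move=> cf cF _ xstar_opt _ _ _ G0_xstar _ _ epi_sub_M0 v1_int v2_int alpha_le.
move=> q1_ge1 q2_ge1 run [phi [phi_incr u_cvg]].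
have y_cvg : (fun k => y (phi k)) @ \oo --> ybar.
  exact: (cvg_comp _ _ u_cvg (@cvg_fst _ _ _ (nbhs gbar) _)).
have gam_cvg : (fun k => gam (phi k)) @ \oo --> gbar.
  exact: (cvg_comp _ _ u_cvg (@cvg_snd _ _ (nbhs ybar) _ _)).
have gbar_le : gbar <= f xstar.
  have gam_le : \forall k \near \oo, gam (phi k) <= f xstar.
    by apply: nearW => k; apply: (gam_le_fxstar run).
  exact: (closed_cvg _ (@closed_le _ (f xstar)) gam_le _ gam_cvg).
have [r1 r1_gt0 epi_cuts] := run_epi_cuts run v1_int.
have epi_bar : epi f (ybar, gbar).
  apply: (convex_closed_epi cf (interior_epi_near_le v1_int)).
  have cuts k := epi_cuts _ _ (phi_incr k).
  apply: (cut_steps_closure r1_gt0 _ _ u_cvg cuts) => //.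
  exact: le_trans ler01 q1_ge1.
have [r2 r2_gt0 feasible_cuts] := run_feasible_cuts run v2_int.
have feasible_bar : feasible F ybar.
  apply: (closed_feasible (convex_closed_epi cF v2_int)).
  have cuts k := feasible_cuts _ _ (phi_incr k).
  apply: (cut_steps_closure r2_gt0 _ _ y_cvg cuts) => //.
  exact: le_trans ler01 q2_ge1.
split=> // x Dx; have := xstar_opt.2 x Dx; move: epi_bar; rewrite /epi /=; lra.
Qed.
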